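(* Let $X$ be a finite set with $|X|=n$, $0\notin X$, $W=X\cup\{0\}$. Let $\mathfrak{V}$ be a $\big(\binom{n}{2}_{\,n-2}\ \binom{n}{3}_{\,3}\big)$-configuration whose point set is $\mathcal{P}_2(X)$, and let $\mathfrak{M}$ be the structure with point set $\mathcal{P}_2(W)$ whose lines are the lines of $\mathfrak{V}$ together with all sets $\{\{0,x\},\{0,y\},\{x,y\}\}$ for distinct $x,y\in X$. Let $H$ be a hyperplane of $\mathfrak{M}$, and on $X$ define the equivalence relation $x\sim y$ iff $x=y$, or $x\neq y$ and $\{x,y\}\in H$. If $\mathfrak{a},\mathfrak{b}$ are equivalence classes of $\sim$ with $\{0,x\}\in H$ for all $x\in\mathfrak{a}\cup\mathfrak{b}$, then $\mathfrak{a}=\mathfrak{b}$.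
   Context: $\mathcal{P}_2(Y)$ denotes the set of $2$-element subsets of $Y$. A $(v_r\ b_k)$-configuration is a partial linear space with $v$ points and $b$ lines, each point on exactly $r$ lines and each line containing exactly $k$ points. A subspace is a set of points containing every line that meets it in at least two points; a hyperplane is a proper subspace meeting every line. (A point $x\in X$ is identified with the point $\{0,x\}$, so ''$\mathfrak{a}\subseteq H$'' means $\{0,x\}\in H$ for all $x\in\mathfrak{a}$.) *)

From mathcomp Require Import all_boot.
Set Implicit Arguments. Unset Strict Implicit. Unset Printing Implicit Defensive.

Definition P2 (Y : finType) : {set {set Y}} := [set A : {set Y} | #|A| == 2].

Definition partial_linear_space (T : finType) (P : {set T}) (L : {set {set T}}) :=
  (forall l, l \in L -> l \subset P /\ 1 < #|l|) /\
  (forall l1 l2, l1 \in L -> l2 \in L -> l1 != l2 -> #|l1 :&: l2| <= 1).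

Definition configuration (T : finType) (P : {set T}) (L : {set {set T}})
  (v r b k : nat) :=
  [/\ partial_linear_space P L, #|P| = v, #|L| = b,
      (forall p, p \in P -> #|[set l in L | p \in l]| = r) &
      (forall l, l \in L -> #|l| = k)].

Definition subspace (T : finType) (P : {set T}) (L : {set {set T}}) (S : {set T}) :=
  S \subset P /\ (forall l, l \in L -> 1 < #|l :&: S| -> l \subset S).

Definition hyperplane (T : finType) (P : {set T}) (L : {set {set T}}) (H : {set T}) :=
  [/\ subspace P L H, H \proper P & (forall l, l \in L -> l :&: H != set0)].

(* W = X ∪ {0} is modelled as option X, with 0 = None and x = Some x. *)
Definition embed_line (X : finType) (l : {set {set X}}) : {set {set option X}} :=
  [set (@Some X) @: p | p : {set X} in l].

Definition tri_line (X : finType) (x y : X) : {set {set option X}} :=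
  [set [set None; Some x]; [set None; Some y]; [set Some x; Some y]].

Definition M_lines (X : finType) (L : {set {set {set X}}}) : {set {set {set option X}}} :=
  [set embed_line l | l in L] :|: [set tri_line xy.1 xy.2 | xy : X * X & xy.1 != xy.2].

Definition simH (X : finType) (H : {set {set option X}}) (x y : X) : bool :=
  (x == y) || ((x != y) && ([set Some x; Some y] \in H)).

Definition simclass (X : finType) (H : {set {set option X}}) (x : X) : {set X} :=
  [set y | simH H x y].

From mathcomp Require Import all_boot.
Set Implicit Arguments. Unset Strict Implicit. Unset Printing Implicit Defensive.

(* If {0,x} and {0,y} lie in H, the line {{0,x},{0,y},{x,y}} meets H in two
   points, so H contains {x,y} and x ~ y.  Hence all elements of a and b are
   pairwise equivalent, and two classes sharing such elements coincide. *)

Lemma subspace_line_sub (T : finType) (P : {set T}) (L : {set {set T}})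
    (S : {set T}) (l : {set T}) (p q : T) :
  subspace P L S -> l \in L -> p != q ->
  p \in l :&: S -> q \in l :&: S -> l \subset S.
Proof.
move=> [_ closedS] lL npq pS qS; apply: (closedS _ lL).
by apply/card_gt1P; exists p, q.
Qed.

Lemma tri_line_in_M_lines (X : finType) (L : {set {set {set X}}}) (x y : X) :
  x != y -> tri_line x y \in M_lines L.
Proof.
move=> nxy; rewrite /M_lines inE; apply/orP; right.
by apply/imsetP; exists (x, y); rewrite ?inE.
Qed.

Lemma pair0_inj (X : finType) (x y : X) :
  ([set None; Some x] == [set None; Some y] :> {set option X}) = (x == y).
Proof.
apply/eqP/eqP => [E | -> //].
have : Some y \in [set None; Some x] by rewrite E !inE eqxx orbT.
by rewrite !inE /= => /eqP [].
Qed.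

Lemma simH_pair0 (X : finType) (L : {set {set {set X}}})
    (H : {set {set option X}}) (x y : X) :
  subspace (P2 (option X)) (M_lines L) H ->
  [set None; Some x] \in H -> [set None; Some y] \in H -> simH H x y.
Proof.
move=> subH Hx Hy; rewrite /simH; have [//|nxy /=] := eqVneq x y.
have : tri_line x y \subset H.
  apply: (subspace_line_sub (p := [set None; Some x]) (q := [set None; Some y])
                            subH (tri_line_in_M_lines L nxy)).
  - by rewrite pair0_inj.
  - by rewrite inE Hx !inE eqxx.
  - by rewrite inE Hy !inE eqxx orbT.
by move/subsetP; apply; rewrite !inE eqxx !orbT.
Qed.

Theorem lemma3p3 (X : finType) (n : nat) (L : {set {set {set X}}})
  (H : {set {set option X}}) :
  #|X| = n ->
  configuration (P2 X) L 'C(n, 2) (n - 2) 'C(n, 3) 3 ->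
  hyperplane (P2 (option X)) (M_lines L) H ->
  forall a b : {set X},
    (exists x, a = simclass H x) ->
    (exists y, b = simclass H y) ->
    (forall z, z \in a :|: b -> [set None; Some z] \in H) ->
    a = b.
Proof.
move=> _ _ [subH _ _] a b [x ->] [y ->] H0.
have Hx : [set None; Some x] \in H by apply: H0; rewrite !inE /simH eqxx.
have Hy : [set None; Some y] \in H by apply: H0; rewrite !inE /simH eqxx orbT.
apply/setP => z; rewrite !inE; apply/idP/idP => zclass.
- by apply: (simH_pair0 subH Hy); apply: H0; rewrite !inE zclass.
- by apply: (simH_pair0 subH Hx); apply: H0; rewrite !inE zclass orbT.
Qed.
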